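(* Let $k\ge2$, $n\ge1$ be integers, let $\bar{\mathcal{P}}\in\mathbb{R}^{[k,n]}$ be a columnwise-substochastic tensor, $\mathbf{v}\in\mathbb{R}^n$ a stochastic vector and $\alpha\in[0,1)$. Let $\Delta:=\{\mathbf{y}\in\mathbb{R}^n_+:\mathbf{e}^T\mathbf{y}\le(1-\alpha)^{-\frac{1}{k-1}}\}$ and $\Phi(\mathbf{y}):=(1+\alpha\mathbf{e}^T(\bar{\mathcal{P}}\mathbf{y}^{k-1}))^{-\frac{k-2}{k-1}}(\mathbf{v}+\alpha\bar{\mathcal{P}}\mathbf{y}^{k-1})$. Define $\varsigma:=(2k-3)\alpha(1-\alpha)^{-\frac{k-2}{k-1}}$. If $\varsigma<1$, then $\Phi$ maps $\Delta$ into $\Delta$ and is a contraction on $\Delta$, i.e., $\|\Phi(\mathbf{x})-\Phi(\mathbf{y})\|_1\le\varsigma\|\mathbf{x}-\mathbf{y}\|_1$ for all $\mathbf{x},\mathbf{y}\in\Delta$.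
   Context: For $\mathcal{P}\in\mathbb{R}^{[k,n]}$ (real tensors of order $k$, dimension $n$) and $\mathbf{y}\in\mathbb{R}^n$, $(\mathcal{P}\mathbf{y}^{k-1})_i=\sum_{i_2,\dots,i_k}p_{i i_2\dots i_k}y_{i_2}\cdots y_{i_k}$. $\bar{\mathcal{P}}$ is columnwise-substochastic if its entries are nonnegative and $\sum_{i}\bar p_{i i_2\dots i_k}\le1$ for all $i_2,\dots,i_k$. $\mathbf{e}$ is the all-ones vector; a stochastic vector is nonnegative with entries summing to $1$. *)

From HB Require Import structures.
From mathcomp Require Import all_boot all_order all_algebra.
From mathcomp Require Import reals exp.
Set Implicit Arguments. Unset Strict Implicit. Unset Printing Implicit Defensive.
Import Order.TTheory GRing.Theory Num.Theory.
Local Open Scope ring_scope.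

(* A real tensor of order k and dimension n: entry p_{i i_2 ... i_k} is
   P i t where t : {ffun 'I_(k.-1) -> 'I_n} encodes (i_2,...,i_k). *)
Definition tensor (R : realType) (k n : nat) :=
  'I_n -> {ffun 'I_k.-1 -> 'I_n} -> R.

Definition tapply (R : realType) (k n : nat) (P : tensor R k n) (y : 'I_n -> R)
  : 'I_n -> R :=
  fun i => \sum_(t : {ffun 'I_k.-1 -> 'I_n}) P i t * \prod_(j < k.-1) y (t j).

Definition col_substochastic (R : realType) (k n : nat) (P : tensor R k n) :=
  (forall i t, 0 <= P i t) /\ (forall t, \sum_(i < n) P i t <= 1).

Definition stochastic (R : realType) (n : nat) (v : 'I_n -> R) :=
  (forall i, 0 <= v i) /\ \sum_(i < n) v i = 1.

Definition esum (R : realType) (n : nat) (y : 'I_n -> R) := \sum_(i < n) y i.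

Definition norm1 (R : realType) (n : nat) (y : 'I_n -> R) := \sum_(i < n) `|y i|.

Definition Delta (R : realType) (k n : nat) (alpha : R) (y : 'I_n -> R) :=
  (forall i, 0 <= y i) /\
  esum y <= powR (1 - alpha) (- (1 / (k%:R - 1))).

Definition Phi (R : realType) (k n : nat) (P : tensor R k n) (v : 'I_n -> R)
  (alpha : R) (y : 'I_n -> R) : 'I_n -> R :=
  fun i => powR (1 + alpha * esum (tapply P y)) (- ((k%:R - 2) / (k%:R - 1)))
           * (v i + alpha * tapply P y i).

Definition varsigma (R : realType) (k : nat) (alpha : R) :=
  (2 * k%:R - 3) * alpha * powR (1 - alpha) (- ((k%:R - 2) / (k%:R - 1))).

(* Write m = k - 1, c = 1 - alpha, q = (m - 1)/m and beta = c^(-1/m), the radius of Delta.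
   Column substochasticity gives e^T(P y^m) <= (e^T y)^m <= 1/c on Delta, so
   u := 1 + alpha e^T(P y^m) <= 1/c and, v being stochastic, e^T Phi(y) = u^(1-q) = u^(1/m)
   <= beta.  For the contraction, telescoping the products y_(i_2)...y_(i_k) gives
   |P x^m - P y^m|_1 <= m beta^(m-1) |x - y|_1 on Delta; splitting
   Phi(x) - Phi(y) = u_x^-q alpha (P x^m - P y^m) + (u_x^-q - u_y^-q) (v + alpha P y^m)
   and the mean-value estimate (u_y^-q - u_x^-q) u_y <= q (u_x - u_y) yield
   |Phi(x) - Phi(y)|_1 <= alpha (1 + q) |P x^m - P y^m|_1, and alpha (1 + q) m beta^(m-1)
   is exactly varsigma. *)

From HB Require Import structures.
From mathcomp Require Import all_boot all_order all_algebra.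
From mathcomp Require Import reals exp ring lra.
Set Implicit Arguments. Unset Strict Implicit. Unset Printing Implicit Defensive.
Import Order.TTheory GRing.Theory Num.Theory.
Local Open Scope ring_scope.

Definition splice (T : Type) (m : nat) (a d b : T) (l j : 'I_m) : T :=
  if (j < l)%N then a else if j == l then d else b.

Lemma splice_map (T U : Type) (f : T -> U) m (a d b : T) (l j : 'I_m) :
  f (splice a d b l j) = splice (f a) (f d) (f b) l j.
Proof. by rewrite /splice; case: ifP => //; case: ifP. Qed.

Lemma prodrB_telescope (R : comRingType) m (a b : 'I_m -> R) :
  \prod_j a j - \prod_j b j =
  \sum_(l < m) \prod_(j < m) splice (a j) (a j - b j) (b j) l j.
Proof.
elim: m a b => [|m IH] a b; first by rewrite !big_ord0 subrr.
have shift l : \prod_(j < m.+1) splice (a j) (a j - b j) (b j) (lift ord0 l) j =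
    a ord0 * \prod_(j < m) splice (a (lift ord0 j)) (a (lift ord0 j) - b (lift ord0 j))
                               (b (lift ord0 j)) l j.
  by rewrite big_ord_recl /splice /=; congr (_ * _); apply: eq_bigr => j _;
    rewrite ltnS (inj_eq (@lift_inj _ ord0)).
rewrite [RHS]big_ord_recl (eq_bigr _ (fun l _ => shift l)) -big_distrr -IH.
rewrite !big_ord_recl /splice /=; ring.
Qed.

Lemma norm_prodrB_le (R : numDomainType) m (a b : 'I_m -> R) :
  `|\prod_j a j - \prod_j b j| <=
  \sum_(l < m) \prod_(j < m) splice `|a j| `|a j - b j| `|b j| l j.
Proof.
rewrite prodrB_telescope; apply: le_trans (ler_norm_sum _ _ _) _.
by apply: ler_sum => l _; rewrite normr_prod; under eq_bigr do rewrite splice_map.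
Qed.

Lemma prod_splice_const (R : comRingType) m (B N : R) (l : 'I_m) :
  \prod_(j < m) splice B N B l j = N * B ^+ m.-1.
Proof.
rewrite (bigD1 l) //= /splice ltnn eqxx; congr (_ * _).
rewrite (eq_bigr (fun _ => B)) ?prodr_const ?cardC1 ?card_ord // => j /negPf ->.
by case: ifP.
Qed.

Lemma sum_ffun_prod_splice (R : comRingType) m n (a d b : 'I_n -> R) (l : 'I_m) :
  \sum_(t : {ffun 'I_m -> 'I_n}) \prod_(j < m) splice (a (t j)) (d (t j)) (b (t j)) l j =
  \prod_(j < m) splice (\sum_i a i) (\sum_i d i) (\sum_i b i) l j.
Proof.
transitivity (\prod_(j < m) \sum_i splice (a i) (d i) (b i) l j).
  by rewrite bigA_distr_bigA.
apply: eq_bigr => j _; rewrite /splice; case: ifP => _ //; case: ifP => _ //.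
Qed.

Lemma sum_ffun_normB_prod_le (R : numDomainType) m n (x y : 'I_n -> R) (B : R) :
  (forall i, 0 <= x i) -> (forall i, 0 <= y i) ->
  \sum_i x i <= B -> \sum_i y i <= B ->
  \sum_(t : {ffun 'I_m -> 'I_n}) `|\prod_j x (t j) - \prod_j y (t j)| <=
  m%:R * B ^+ m.-1 * \sum_i `|x i - y i|.
Proof.
move=> x0 y0 xB yB.
have sx : 0 <= \sum_i `|x i| <= B.
  by rewrite sumr_ge0 //= (eq_bigr _ (fun i _ => ger0_norm (x0 i))).
have sy : 0 <= \sum_i `|y i| <= B.
  by rewrite sumr_ge0 //= (eq_bigr _ (fun i _ => ger0_norm (y0 i))).
have N0 : 0 <= \sum_i `|x i - y i| by exact: sumr_ge0.
apply: le_trans (ler_sum _ (fun t _ => norm_prodrB_le _ _)) _.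
rewrite exchange_big /=.
under eq_bigr do rewrite (sum_ffun_prod_splice (fun i => `|x i|) (fun i => `|x i - y i|)
                                               (fun i => `|y i|)).
have -> : m%:R * B ^+ m.-1 * \sum_i `|x i - y i| =
          \sum_(l < m) (\sum_i `|x i - y i|) * B ^+ m.-1.
  by rewrite sumr_const card_ord -[RHS]mulr_natl mulrA mulrAC.
apply: ler_sum => l _; rewrite -(prod_splice_const B _ l); apply: ler_prod => j _.
by rewrite /splice; case: (j < l)%N; [|case: (j == l)]; rewrite // N0 lexx.
Qed.

Section TensorApply.
Variables (R : realType) (k n : nat) (P : tensor R k n).
Hypothesis P_sub : col_substochastic P.

Lemma tapply_ge0 (y : 'I_n -> R) i :
  (forall i, 0 <= y i) -> 0 <= tapply P y i.
Proof.
move=> y0; apply: sumr_ge0 => t _; apply: mulr_ge0; first exact: P_sub.1.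
exact: prodr_ge0.
Qed.

Lemma esum_tapply_le (y : 'I_n -> R) :
  (forall i, 0 <= y i) -> esum (tapply P y) <= esum y ^+ k.-1.
Proof.
move=> y0; have -> : esum y ^+ k.-1 = \prod_(j < k.-1) esum y.
  by rewrite prodr_const card_ord.
rewrite /esum /tapply exchange_big bigA_distr_bigA /=; apply: ler_sum => t _.
by rewrite -big_distrl /= ler_piMl ?prodr_ge0 ?P_sub.2.
Qed.

Lemma norm1_tapplyB_le (x y : 'I_n -> R) (B : R) :
  (forall i, 0 <= x i) -> (forall i, 0 <= y i) -> esum x <= B -> esum y <= B ->
  norm1 (fun i => tapply P x i - tapply P y i) <=
  k.-1%:R * B ^+ k.-2 * norm1 (fun i => x i - y i).
Proof.
move=> x0 y0 xB yB; apply: le_trans (sum_ffun_normB_prod_le _ x0 y0 xB yB).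
rewrite /norm1 /tapply.
apply: (@le_trans _ _ (\sum_(i < n) \sum_(t : {ffun 'I_k.-1 -> 'I_n})
   P i t * `|\prod_j x (t j) - \prod_j y (t j)|)).
  apply: ler_sum => i _; rewrite -sumrB.
  apply: le_trans (ler_norm_sum _ _ _) _; apply: ler_sum => t _.
  by rewrite -mulrBr normrM ger0_norm ?P_sub.1.
rewrite exchange_big /=; apply: ler_sum => t _.
by rewrite -big_distrl /= ler_piMl ?P_sub.2.
Qed.

End TensorApply.

Lemma esumB_le_norm1 (R : realType) n (a b : 'I_n -> R) :
  esum a - esum b <= norm1 (fun i => a i - b i).
Proof. by rewrite /esum -sumrB; apply: ler_sum => i _; exact: ler_norm. Qed.

Lemma powRN_ge1B (R : realType) (z p : R) :
  0 < z -> 0 <= p -> 1 - p * (z - 1) <= powR z (- p).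
Proof.
move=> z0 p0; rewrite /powR gt_eqF //; apply: le_trans (expR_ge1Dx _).
rewrite mulNr lerD2l lerN2 ler_wpM2l //.
by have := @le_ln1Dx R (z - 1); rewrite subrKC; apply; lra.
Qed.

(* Mean-value bound for t |-> t^-p on [u, w]: factor w^-p = u^-p (w/u)^-p and apply
   Bernoulli's inequality to (w/u)^-p. *)
Lemma powRNB_mul_le (R : realType) (u w p : R) :
  1 <= u -> u <= w -> 0 <= p -> (powR u (- p) - powR w (- p)) * u <= p * (w - u).
Proof.
move=> u1 uw p0; have u0 : 0 < u := lt_le_trans ltr01 u1.
have w0 : 0 < w := lt_le_trans u0 uw.
have -> : powR w (- p) = powR u (- p) * powR (w / u) (- p).
  by rewrite -powRM ?ltW ?divr_gt0 // mulrCA mulfV ?gt_eqF ?mulr1.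
have -> : p * (w - u) = p * (w / u - 1) * u.
  by rewrite -mulrA mulrBl divfK ?gt_eqF ?mul1r.
rewrite ler_pM2r // -[X in X - _]mulr1 -mulrBr.
have d1 : 1 <= w / u by rewrite ler_pdivlMr // mul1r.
have bernoulli := powRN_ge1B (divr_gt0 w0 u0) p0.
have g1 : powR u (- p) <= 1 by rewrite -[leRHS](powRr0 u) ler_powR // oppr_le0.
apply: le_trans (ler_piMl _ g1); last by rewrite mulr_ge0 // subr_ge0.
by rewrite ler_wpM2l ?powR_ge0 //; lra.
Qed.

Section PhiContraction.
Variables (R : realType) (k n : nat) (P : tensor R k n) (v : 'I_n -> R) (alpha : R).
Hypotheses (k_ge2 : (2 <= k)%N) (P_sub : col_substochastic P) (v_stoch : stochastic v).
Hypotheses (alpha_ge0 : 0 <= alpha) (alpha_lt1 : alpha < 1).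

Local Notation q := ((k%:R - 2) / (k%:R - 1) : R).
Local Notation beta := (powR (1 - alpha) (- (1 / (k%:R - 1)))).
Local Notation u y := (1 + alpha * esum (tapply P y)).
Local Notation g y := (powR (u y) (- q)).

Lemma natr_km1 : k%:R - 1 = k.-1%:R :> R.
Proof. by rewrite -subn1 natrB // ltnW. Qed.

Lemma natr_km2 : k%:R - 2 = k.-2%:R :> R.
Proof. by rewrite -subn2 natrB. Qed.

Lemma natr_km1_neq0 : k%:R - 1 != 0 :> R.
Proof. by rewrite natr_km1 pnatr_eq0 -lt0n -ltnS prednK // ltnW. Qed.

Lemma alpha_compl_gt0 : 0 < 1 - alpha.
Proof. by rewrite subr_gt0. Qed.

Lemma beta_expn_km1 : beta ^+ k.-1 = (1 - alpha)^-1.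
Proof.
rewrite -powR_mulrn ?powR_ge0 // -powRrM -natr_km1 mulNr div1r mulVf ?natr_km1_neq0 //.
by rewrite powR_inv1 // ltW // alpha_compl_gt0.
Qed.

Lemma beta_expn_km2 : beta ^+ k.-2 = powR (1 - alpha) (- q).
Proof. by rewrite -powR_mulrn ?powR_ge0 // -powRrM -natr_km2 mulNr div1r mulrC. Qed.

Lemma varsigmaE : varsigma k alpha = alpha * (1 + q) * (k.-1%:R * beta ^+ k.-2).
Proof.
rewrite /varsigma beta_expn_km2 -natr_km1; field.
exact: natr_km1_neq0.
Qed.

Lemma Delta_esum_tapply_le y : Delta k alpha y -> esum (tapply P y) <= (1 - alpha)^-1.
Proof.
move=> [y0 yB]; apply: le_trans (esum_tapply_le P_sub y0) _.
by rewrite -beta_expn_km1 lerXn2r // nnegrE ?powR_ge0 // sumr_ge0.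
Qed.

Lemma u_ge1 y : (forall i, 0 <= y i) -> 1 <= u y.
Proof. by move=> y0; rewrite lerDl mulr_ge0 // sumr_ge0 // => i _; exact: tapply_ge0. Qed.

Lemma Phi_ge0 y i : (forall i, 0 <= y i) -> 0 <= Phi P v alpha y i.
Proof.
move=> y0; rewrite mulr_ge0 ?powR_ge0 // addr_ge0 ?v_stoch.1 //.
by rewrite mulr_ge0 // tapply_ge0.
Qed.

Lemma esum_Phi y : (forall i, 0 <= y i) ->
  esum (Phi P v alpha y) = powR (u y) (1 / (k%:R - 1)).
Proof.
move=> y0; rewrite /esum /Phi -big_distrr big_split -big_distrr /= v_stoch.2.
have u0 : 0 < u y by apply: lt_le_trans (u_ge1 y0).
rewrite -{2}(powRr1 (ltW u0)) -powRD; last by rewrite (gt_eqF u0) implybT.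
suff -> : - q + 1 = 1 / (k%:R - 1) :> R by [].
by field; exact: natr_km1_neq0.
Qed.

Lemma Phi_Delta y : Delta k alpha y -> Delta k alpha (Phi P v alpha y).
Proof.
move=> Dy; have y0 := Dy.1; split=> [i|]; first exact: Phi_ge0.
have c0 := alpha_compl_gt0.
have uc : u y <= (1 - alpha)^-1.
  have -> : (1 - alpha)^-1 = 1 + alpha * (1 - alpha)^-1 by field; rewrite gt_eqF.
  by rewrite lerD2l ler_wpM2l // Delta_esum_tapply_le.
have -> : beta = powR (1 - alpha)^-1 (1 / (k%:R - 1)).
  by rewrite -(powR_inv1 (ltW c0)) -powRrM mulN1r.
rewrite esum_Phi //.
apply: ge0_ler_powR uc; rewrite ?nnegrE.
- by rewrite natr_km1 divr_ge0.
- exact: le_trans (u_ge1 y0).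
- by rewrite invr_ge0 ltW.
Qed.

Lemma q_ge0 : 0 <= q.
Proof. by rewrite natr_km1 natr_km2 divr_ge0. Qed.

Lemma g_le1 y : (forall i, 0 <= y i) -> g y <= 1.
Proof. by move=> y0; rewrite -[leRHS](powRr0 (u y)) ler_powR ?u_ge1 // oppr_le0 q_ge0. Qed.

Lemma g_le x y : (forall i, 0 <= y i) ->
  esum (tapply P y) <= esum (tapply P x) -> g x <= g y.
Proof.
move=> y0 sxy; have uy1 := u_ge1 y0; have uxy : u y <= u x by rewrite lerD2l ler_wpM2l.
have uy0 : 0 < u y := lt_le_trans ltr01 uy1; have ux0 : 0 < u x := lt_le_trans uy0 uxy.
rewrite !powRN lef_pV2 ?posrE ?powR_gt0 //.
by apply: ge0_ler_powR; rewrite ?nnegrE ?q_ge0 ?(ltW uy0) ?(ltW ux0).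
Qed.

Lemma norm1_PhiB_le_split x y :
  (forall i, 0 <= x i) -> (forall i, 0 <= y i) -> g x <= g y ->
  norm1 (fun i => Phi P v alpha x i - Phi P v alpha y i) <=
  g x * (alpha * norm1 (fun i => tapply P x i - tapply P y i)) + (g y - g x) * u y.
Proof.
move=> x0 y0 gxy.
have gx0 : 0 <= g x := powR_ge0 _ _.
have gd0 : 0 <= g y - g x by rewrite subr_ge0.
have w0 i : 0 <= v i + alpha * tapply P y i.
  by rewrite addr_ge0 ?v_stoch.1 // mulr_ge0 // tapply_ge0.
apply: (@le_trans _ _ (\sum_i (g x * (alpha * `|tapply P x i - tapply P y i|)
                                + (g y - g x) * (v i + alpha * tapply P y i)))).
  apply: ler_sum => i _; rewrite /Phi.
  have -> : g x * (v i + alpha * tapply P x i) - g y * (v i + alpha * tapply P y i)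
           = g x * (alpha * (tapply P x i - tapply P y i))
             + (g x - g y) * (v i + alpha * tapply P y i) by ring.
  apply: le_trans (ler_normD _ _) _.
  by rewrite !normrM (ger0_norm gx0) (ger0_norm alpha_ge0) (distrC (g x)) (ger0_norm (w0 i))
    (ger0_norm gd0).
by rewrite big_split /= -!big_distrr /= big_split /= -big_distrr /= v_stoch.2.
Qed.

Lemma norm1_PhiB_le_tapply x y :
  (forall i, 0 <= x i) -> (forall i, 0 <= y i) ->
  esum (tapply P y) <= esum (tapply P x) ->
  norm1 (fun i => Phi P v alpha x i - Phi P v alpha y i) <=
  alpha * (1 + q) * norm1 (fun i => tapply P x i - tapply P y i).
Proof.
move=> x0 y0 sxy.
apply: le_trans (norm1_PhiB_le_split x0 y0 (g_le y0 sxy)) _.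
have sxyD := esumB_le_norm1 (tapply P x) (tapply P y).
set D := norm1 _ in sxyD *; have D0 : 0 <= D by exact: sumr_ge0.
have uxy : u y <= u x by rewrite lerD2l ler_wpM2l.
have gain : (g y - g x) * u y <= q * (alpha * D).
  apply: le_trans (powRNB_mul_le (u_ge1 y0) uxy q_ge0) _.
  have -> : u x - u y = alpha * (esum (tapply P x) - esum (tapply P y)) by ring.
  by rewrite ler_wpM2l ?q_ge0 // ler_wpM2l.
have := ler_piMl (mulr_ge0 alpha_ge0 D0) (g_le1 x0); lra.
Qed.

Lemma Phi_contraction x y : Delta k alpha x -> Delta k alpha y ->
  norm1 (fun i => Phi P v alpha x i - Phi P v alpha y i) <=
  varsigma k alpha * norm1 (fun i => x i - y i).
Proof.
wlog sxy : x y / esum (tapply P y) <= esum (tapply P x) => [wlog_sxy|[x0 xB] [y0 yB]].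
  move=> Dx Dy; have [|/ltW syx] := leP (esum (tapply P y)) (esum (tapply P x)).
    by move/wlog_sxy; apply.
  rewrite /norm1 (eq_bigr _ (fun i _ => distrC (x i) _)).
  by rewrite (eq_bigr _ (fun i _ => distrC (Phi P v alpha x i) _)); exact: wlog_sxy.
apply: le_trans (norm1_PhiB_le_tapply x0 y0 sxy) _.
rewrite varsigmaE -[leRHS]mulrA ler_wpM2l ?mulr_ge0 ?addr_ge0 ?q_ge0 //.
exact: norm1_tapplyB_le.
Qed.

End PhiContraction.

Theorem theorem3p10 (R : realType) (k n : nat) (P : tensor R k n)
  (v : 'I_n -> R) (alpha : R) :
  (2 <= k)%N -> (1 <= n)%N ->
  col_substochastic P -> stochastic v -> 0 <= alpha < 1 ->
  varsigma k alpha < 1 ->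
  (forall y, Delta k alpha y -> Delta k alpha (Phi P v alpha y)) /\
  (forall x y, Delta k alpha x -> Delta k alpha y ->
     norm1 (fun i => Phi P v alpha x i - Phi P v alpha y i)
       <= varsigma k alpha * norm1 (fun i => x i - y i)).
Proof.
move=> k_ge2 _ P_sub v_stoch /andP[alpha_ge0 alpha_lt1] _.
split; [exact: Phi_Delta | exact: Phi_contraction].
Qed.
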